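(* Let $\{X(t)\}_{t\ge 0}$ be generated by the voting diffusion model (defined in the context) with an arbitrary communicating pair process $\{\{i_1(t),i_2(t)\}\}$ and an arbitrary subject process $\{S(t)\}$, starting from an arbitrary (random) initial profile $X(0)\in\mathbb{R}^{m\times n}$. Then $\lim_{t\to\infty}X(t)$ exists almost surely.
   Context: Voting diffusion model: there are $m$ agents indexed by $[m]=\{1,\dots,m\}$ and $n$ candidates indexed by $[n]$. The opinion profile at time $t\in\{0,1,2,\dots\}$ is a random real $m\times n$ matrix $X(t)$, where $X_{ij}(t)$ is agent $i$'s score of candidate $j$. A communicating pair process is a sequence of random unordered pairs $\{i_1(t),i_2(t)\}$ with $i_1(t)\ne i_2(t)\in[m]$ (each measurable w.r.t. the discrete $\sigma$-algebra on the set of such pairs). A subject process is a sequence of random subsets $S(t)\subseteq[n]$ (measurable w.r.t. the power-set $\sigma$-algebra). No independence, stationarity, or adaptedness is assumed on either process; they may depend arbitrarily on the past, the future, or external randomness. The update is: $X_{ij}(t+1)=\tfrac12\big(X_{i_1(t)j}(t)+X_{i_2(t)j}(t)\big)$ if $i\in\{i_1(t),i_2(t)\}$ and $j\in S(t)$, and $X_{ij}(t+1)=X_{ij}(t)$ otherwise. *)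

From Stdlib Require Import Reals Arith Bool.
Open Scope R_scope.

(* X t i j : score of agent i for candidate j at time t (only i < m, j < n matter).
   Communicating pair at time t: {i1 t, i2 t} with i1 t <> i2 t, both < m
   (an unordered pair represented by any ordering; the update is symmetric). *)
Definition voting_diffusion (m n : nat) (X : nat -> nat -> nat -> R)
    (i1 i2 : nat -> nat) (S : nat -> nat -> bool) : Prop :=
  (forall t, (i1 t < m)%nat /\ (i2 t < m)%nat /\ i1 t <> i2 t) /\
  (forall t i j, (i < m)%nat -> (j < n)%nat ->
     X (Datatypes.S t) i j =
       if ((Nat.eqb i (i1 t) || Nat.eqb i (i2 t)) && S t j)%bool
       then (X t (i1 t) j + X t (i2 t) j) / 2
       else X t i j).

From Stdlib Require Import Reals Arith Bool Lra Lia Classical.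
From Coquelicot Require Import Coquelicot.
Open Scope R_scope.

(* Fix a candidate j: the column x t k = X(t)_{kj} evolves by "averaging steps"
   (two agents replace their values by their mean, or nothing happens).  For
   every level c the excess  E_t(c) = sum_k (x t k - c)^+  is nonincreasing in
   t (convexity of the hinge), so it converges to some H(c); H is nonincreasing
   with slopes in [-m, 0].  If some coordinate x t i did not converge, it would
   oscillate between levels a < b.  A telescoping/pigeonhole argument gives a
   level c in (a, b) and a scale d where H is almost affine (second difference
   < d/2).  Then x t i eventually stays at distance > d/2 from c, and any
   crossing of c would lower E_t(c) by more than d/2, impossible once E_t(c)
   has nearly converged; so x t i eventually stays on one side of c,
   contradicting the oscillation. *)

Fixpoint sumk (K : nat) (f : nat -> R) : R :=
  match K with O => 0 | Datatypes.S K' => sumk K' f + f K' end.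

Lemma sumk_ext K f g : (forall k, (k < K)%nat -> f k = g k) -> sumk K f = sumk K g.
Proof.
  induction K as [|K IH]; simpl; intros Hfg; auto.
  rewrite IH, Hfg; auto.
Qed.

Lemma sumk_le K f g : (forall k, (k < K)%nat -> f k <= g k) -> sumk K f <= sumk K g.
Proof.
  induction K as [|K IH]; simpl; intros Hfg; [lra|].
  assert (sumk K f <= sumk K g) by (apply IH; intros; apply Hfg; lia).
  specialize (Hfg K ltac:(lia)). lra.
Qed.

Lemma sumk_minus K f g : sumk K (fun k => f k - g k) = sumk K f - sumk K g.
Proof. induction K; simpl; [ring|]. rewrite IHK; ring. Qed.

Lemma sumk_const K a : sumk K (fun _ => a) = INR K * a.
Proof. induction K; simpl sumk; [simpl; ring|]. rewrite IHK, S_INR; ring. Qed.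

Lemma sumk_nonneg K f : (forall k, (k < K)%nat -> 0 <= f k) -> 0 <= sumk K f.
Proof. intros. rewrite <- (Rmult_0_r (INR K)), <- sumk_const. apply sumk_le. auto. Qed.

Lemma sumk_term K f i :
  (forall k, (k < K)%nat -> 0 <= f k) -> (i < K)%nat -> f i <= sumk K f.
Proof.
  induction K as [|K IH]; intros Hf Hi; simpl; [lia|].
  assert (0 <= sumk K f) by (apply sumk_nonneg; intros; apply Hf; lia).
  assert (0 <= f K) by (apply Hf; lia).
  destruct (Nat.eq_dec i K) as [->|Hne]; [lra|].
  assert (f i <= sumk K f) by (apply IH; [intros; apply Hf|]; lia). lra.
Qed.

Lemma sumk_support1 K f p :
  (p < K)%nat -> (forall k, (k < K)%nat -> k <> p -> f k = 0) -> sumk K f = f p.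
Proof.
  induction K as [|K IH]; intros Hp Hf; simpl; [lia|].
  destruct (Nat.eq_dec p K) as [->|Hne].
  - rewrite (sumk_ext K f (fun _ => 0)), sumk_const; [ring|].
    intros k Hk; apply Hf; lia.
  - rewrite IH, (Hf K); try ring; intros; try apply Hf; lia.
Qed.

Lemma sumk_support2 K f p q : (p < K)%nat -> (q < K)%nat -> p <> q ->
  (forall k, (k < K)%nat -> k <> p -> k <> q -> f k = 0) -> sumk K f = f p + f q.
Proof.
  induction K as [|K IH]; intros Hp Hq Hpq Hf; simpl; [lia|].
  destruct (Nat.eq_dec p K) as [->|HpK]; [|destruct (Nat.eq_dec q K) as [->|HqK]].
  - rewrite (sumk_support1 K f q); [ring|lia|intros; apply Hf; lia].
  - rewrite (sumk_support1 K f p); [ring|lia|intros; apply Hf; lia].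
  - rewrite IH, (Hf K); try ring; intros; try apply Hf; lia.
Qed.

Lemma sumk_telescope K g : sumk K (fun r => g r - g (Datatypes.S r)) = g O - g K.
Proof. induction K; simpl; [ring|]. rewrite IHK; ring. Qed.

Lemma pigeonhole K f e :
  (0 < K)%nat -> sumk K f <= INR K * e -> exists r, (r < K)%nat /\ f r <= e.
Proof.
  induction K as [|K IH]; intros HK Hsum; [lia|].
  destruct (Rle_lt_dec (f K) e) as [Hle|Hgt]; [exists K; split; auto|].
  simpl sumk in Hsum. rewrite S_INR in Hsum.
  destruct K as [|K]; [simpl in Hsum; lra|].
  destruct (IH ltac:(lia) ltac:(lra)) as [r [Hr Hfr]]. exists r; split; auto.
Qed.

Definition second_diff (F : R -> R) (c d : R) : R := (F (c - d) - F c) - (F c - F (c + d)).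

(* A nonincreasing function whose decrease over [c, c + d] is at most M d is
   "almost affine" somewhere in every interval: by telescoping, the second
   differences along a grid of 2M + 1 points sum to at most M d. *)
Lemma small_second_difference (F : R -> R) (M : nat) a b :
  (forall c d, 0 <= d -> F (c + d) <= F c <= F (c + d) + INR M * d) ->
  a < b -> exists c d, a < c < b /\ 0 < d /\ second_diff F c d < d / 2.
Proof.
  intros HF Hab.
  set (K := (2 * M + 1)%nat).
  assert (HK : INR K = 2 * INR M + 1)
    by (unfold K; rewrite plus_INR, mult_INR; simpl; ring).
  pose proof (pos_INR M) as HM.
  set (d := (b - a) / (INR K + 1)).
  assert (Hd : 0 < d) by (unfold d; apply Rdiv_lt_0_compat; lra).
  set (c := fun r : nat => a + INR r * d).
  assert (HcS : forall r, c (Datatypes.S r) = c r + d)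
    by (intro r; unfold c; rewrite S_INR; ring).
  set (slope := fun r => F (c r) - F (c (Datatypes.S r))).
  assert (Hsum : sumk K (fun r => second_diff F (c (Datatypes.S r)) d) <= INR M * d).
  { rewrite (sumk_ext K _ (fun r => slope r - slope (Datatypes.S r))), sumk_telescope.
    - unfold slope. rewrite !HcS.
      pose proof (HF (c O) d ltac:(lra)). pose proof (HF (c K) d ltac:(lra)). lra.
    - intros r _. unfold second_diff, slope. rewrite !HcS.
      replace (c r + d - d) with (c r) by ring. ring. }
  destruct (pigeonhole K (fun r => second_diff F (c (Datatypes.S r)) d) (INR M * d / INR K) ltac:(lia))
    as [r [Hr Hsmall]].
  { replace (INR K * (INR M * d / INR K)) with (INR M * d) by (field; lra). exact Hsum. }
  exists (c (Datatypes.S r)), d. repeat split; auto.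
  - unfold c. pose proof (pos_INR r). rewrite S_INR. nra.
  - assert (INR (Datatypes.S r) <= INR K) by (apply le_INR; lia).
    assert (b = a + (INR K + 1) * d) by (unfold d; field; lra).
    unfold c. nra.
  - eapply Rle_lt_trans; [exact Hsmall|].
    apply Rmult_lt_reg_r with (INR K); [lra|].
    unfold Rdiv. rewrite Rmult_assoc, Rinv_l, HK by lra. nra.
Qed.

Lemma oscillation (u : nat -> R) B :
  (forall t, Rabs (u t) <= B) -> ~ (exists l, Un_cv u l) ->
  exists a b, a < b /\ (forall N, exists t, (N <= t)%nat /\ u t <= a) /\
                       (forall N, exists t, (N <= t)%nat /\ b <= u t).
Proof.
  intros Hb Hn.
  assert (Hbnd : forall t, - B <= u t <= B) by (intro t; apply Rabs_le_between, Hb).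
  assert (Hlo : forall t, - B <= u t) by (intro t; apply Hbnd).
  assert (Hhi : forall t, u t <= B) by (intro t; apply Hbnd).
  destruct (ex_LimSup_seq u) as [[ls| |] HS]; destruct (ex_LimInf_seq u) as [[li| |] HI];
    try solve [ destruct (HS B O) as [t [_ Ht]]; specialize (Hhi t); lra
              | destruct (HS (- B)) as [N HN]; specialize (HN N (le_n _)); specialize (Hlo N); lra
              | destruct (HI B) as [N HN]; specialize (HN N (le_n _)); specialize (Hhi N); lra
              | destruct (HI (- B) O) as [t [_ Ht]]; specialize (Hlo t); lra ].
  destruct (Rtotal_order li ls) as [Hlt | [-> | Hgt]].
  - assert (Hd : 0 < (ls - li) / 3) by lra.
    exists (li + (ls - li) / 3), (ls - (ls - li) / 3). split; [lra|]. split; intro N.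
    + destruct (proj1 (HI (mkposreal _ Hd)) N) as [t [Ht Hu]]. exists t. simpl in Hu. split; auto; lra.
    + destruct (proj1 (HS (mkposreal _ Hd)) N) as [t [Ht Hu]]. exists t. simpl in Hu. split; auto; lra.
  - exfalso. apply Hn. exists ls. apply is_lim_seq_Reals, is_LimSup_LimInf_lim_seq; auto.
  - exfalso. assert (Hd : 0 < (li - ls) / 2) by lra.
    destruct (proj2 (HS (mkposreal _ Hd))) as [N1 HN1].
    destruct (proj2 (HI (mkposreal _ Hd))) as [N2 HN2].
    specialize (HN1 (N1 + N2)%nat ltac:(lia)). specialize (HN2 (N1 + N2)%nat ltac:(lia)).
    simpl in *. lra.
Qed.

Lemma upward_crossing (u : nat -> R) c t n :
  u t < c -> c < u (t + n)%nat ->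
  exists s, (t <= s < t + n)%nat /\ u s <= c <= u (Datatypes.S s).
Proof.
  induction n as [|n IH]; intros Hlow Hhigh.
  - rewrite Nat.add_0_r in Hhigh. lra.
  - rewrite Nat.add_succ_r in Hhigh.
    destruct (Rle_lt_dec (u (t + n)%nat) c) as [Hle|Hgt].
    + exists (t + n)%nat. split; [lia|lra].
    + destruct (IH Hlow Hgt) as [s [Hs Hcross]]. exists s. split; [lia|auto].
Qed.

Definition pos_part (y : R) : R := Rmax y 0.

Definition excess (m : nat) (x : nat -> R) (c : R) : R :=
  sumk m (fun k => pos_part (x k - c)).

Definition averaging_step (m : nat) (x y : nat -> R) : Prop :=
  (forall k, (k < m)%nat -> y k = x k) \/
  exists p q, (p < m)%nat /\ (q < m)%nat /\ p <> q /\
    y p = (x p + x q) / 2 /\ y q = (x p + x q) / 2 /\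
    forall k, (k < m)%nat -> k <> p -> k <> q -> y k = x k.

Lemma excess_slope m x c d : 0 <= d ->
  excess m x (c + d) <= excess m x c <= excess m x (c + d) + INR m * d.
Proof.
  intros Hd.
  assert (Hk : forall k, 0 <= pos_part (x k - c) - pos_part (x k - (c + d)) <= d)
    by (intro k; unfold pos_part, Rmax; repeat destruct Rle_dec; lra).
  assert (Hlow : 0 <= excess m x c - excess m x (c + d))
    by (unfold excess; rewrite <- sumk_minus; apply sumk_nonneg; intros; apply Hk).
  assert (Hup : excess m x c - excess m x (c + d) <= INR m * d)
    by (unfold excess; rewrite <- sumk_minus, <- sumk_const; apply sumk_le; intros; apply Hk).
  lra.
Qed.

(* If some agent is within d/2 of c, the second difference of the excess at c
   with step d is at least d/2: the excess is a sum of hinge functions, and the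
   hinge of that agent has a kink near c. *)
Lemma excess_second_diff_ge m x c d i : 0 < d -> (i < m)%nat ->
  Rabs (x i - c) <= d / 2 -> d / 2 <= second_diff (excess m x) c d.
Proof.
  intros Hd Hi Hclose.
  set (tent := fun k => (pos_part (x k - (c - d)) - pos_part (x k - c))
                        - (pos_part (x k - c) - pos_part (x k - (c + d)))).
  assert (Hsum : second_diff (excess m x) c d = sumk m tent)
    by (unfold second_diff, excess, tent; rewrite !sumk_minus; ring).
  assert (Htent : forall k, 0 <= tent k)
    by (intro k; unfold tent, pos_part, Rmax; repeat destruct Rle_dec; lra).
  apply Rabs_le_between' in Hclose.
  assert (d / 2 <= tent i) by (unfold tent, pos_part, Rmax; repeat destruct Rle_dec; lra).
  rewrite Hsum. eapply Rle_trans; [eassumption|]. apply sumk_term; auto.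
Qed.

Lemma averaging_drop u v c :
  0 <= pos_part (u - c) + pos_part (v - c) - 2 * pos_part ((u + v) / 2 - c) /\
  (u <= c <= (u + v) / 2 ->
   c - u <= pos_part (u - c) + pos_part (v - c) - 2 * pos_part ((u + v) / 2 - c)).
Proof. unfold pos_part, Rmax; repeat destruct Rle_dec; split; intros; lra. Qed.

Lemma step_excess_drop m x y c : averaging_step m x y ->
  exists dr, 0 <= dr /\ excess m y c = excess m x c - dr /\
    forall i, (i < m)%nat -> x i <= c <= y i -> c - x i <= dr.
Proof.
  intros [Hsame | [p [q [Hp [Hq [Hpq [Hyp [Hyq Hother]]]]]]]].
  - exists 0. split; [lra|]. split.
    + unfold excess. rewrite (sumk_ext m _ (fun k => pos_part (x k - c))); [ring|].
      intros k Hk. rewrite Hsame; auto.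
    + intros i Hi. rewrite Hsame; auto. lra.
  - set (w := (x p + x q) / 2).
    exists (pos_part (x p - c) + pos_part (x q - c) - 2 * pos_part (w - c)).
    destruct (averaging_drop (x p) (x q) c) as [Hpos Hcross_p].
    destruct (averaging_drop (x q) (x p) c) as [_ Hcross_q].
    replace (x q + x p) with (x p + x q) in Hcross_q by ring. fold w in Hpos, Hcross_p, Hcross_q.
    split; auto. split.
    + assert (Hdiff : excess m y c - excess m x c
                      = (pos_part (y p - c) - pos_part (x p - c))
                        + (pos_part (y q - c) - pos_part (x q - c))).
      { unfold excess. rewrite <- sumk_minus.
        apply (sumk_support2 m (fun k => pos_part (y k - c) - pos_part (x k - c))); auto.
        intros k Hk Hkp Hkq. rewrite Hother; auto. ring. }
      rewrite Hyp, Hyq in Hdiff. fold w in Hdiff. lra.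
    + intros i Hi Hcross.
      destruct (Nat.eq_dec i p) as [->|Hip]; [rewrite Hyp in Hcross; auto|].
      destruct (Nat.eq_dec i q) as [->|Hiq]; [rewrite Hyq in Hcross; specialize (Hcross_q Hcross); lra|].
      rewrite Hother in Hcross; auto. lra.
Qed.

Lemma step_bounded m x y B : averaging_step m x y ->
  (forall k, (k < m)%nat -> Rabs (x k) <= B) ->
  forall k, (k < m)%nat -> Rabs (y k) <= B.
Proof.
  intros [Hsame | [p [q [Hp [Hq [_ [Hyp [Hyq Hother]]]]]]]] Hx k Hk.
  - rewrite Hsame; auto.
  - assert (Havg : Rabs ((x p + x q) / 2) <= B).
    { pose proof (proj1 (Rabs_le_between _ _) (Hx p Hp)).
      pose proof (proj1 (Rabs_le_between _ _) (Hx q Hq)).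
      apply Rabs_le_between. lra. }
    destruct (Nat.eq_dec k p) as [->|Hkp]; [rewrite Hyp; auto|].
    destruct (Nat.eq_dec k q) as [->|Hkq]; [rewrite Hyq; auto|].
    rewrite Hother; auto.
Qed.

Section AveragingProcess.

Variables (m : nat) (x : nat -> nat -> R).
Hypothesis steps : forall t, averaging_step m (x t) (x (Datatypes.S t)).

Lemma process_bounded t k :
  (k < m)%nat -> Rabs (x t k) <= sumk m (fun k => Rabs (x O k)).
Proof.
  revert k. induction t as [|t IH]; intros k Hk.
  - apply (sumk_term m (fun k => Rabs (x O k))); auto. intros; apply Rabs_pos.
  - exact (step_bounded m _ _ _ (steps t) IH k Hk).
Qed.

Lemma excess_nonincreasing t c : excess m (x (Datatypes.S t)) c <= excess m (x t) c.
Proof. destruct (step_excess_drop m _ _ c (steps t)) as [dr [Hdr [-> _]]]. lra. Qed.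

Definition limit_excess (c : R) : R := real (Lim_seq (fun t => excess m (x t) c)).

Lemma excess_cv c : Un_cv (fun t => excess m (x t) c) (limit_excess c).
Proof.
  apply is_lim_seq_Reals. unfold limit_excess.
  assert (Hfin : ex_finite_lim_seq (fun t => excess m (x t) c)).
  { apply (ex_finite_lim_seq_decr _ 0).
    - intro t. apply excess_nonincreasing.
    - intro t. apply sumk_nonneg. intros. apply Rmax_r. }
  destruct Hfin as [l Hl]. rewrite (is_lim_seq_unique _ _ Hl). exact Hl.
Qed.

Lemma limit_excess_slope c d : 0 <= d ->
  limit_excess (c + d) <= limit_excess c <= limit_excess (c + d) + INR m * d.
Proof.
  intros Hd.
  assert (Hcv : Un_cv (fun t => excess m (x t) c - excess m (x t) (c + d))
                      (limit_excess c - limit_excess (c + d)))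
    by (apply CV_minus; apply excess_cv).
  apply is_lim_seq_Reals in Hcv.
  pose proof (fun t => excess_slope m (x t) c d Hd) as Hslope.
  assert (Hlo : Rbar_le 0 (limit_excess c - limit_excess (c + d))).
  { refine (is_lim_seq_le _ _ _ _ _ (is_lim_seq_const 0) Hcv).
    intro t. specialize (Hslope t). lra. }
  assert (Hhi : Rbar_le (limit_excess c - limit_excess (c + d)) (INR m * d)).
  { refine (is_lim_seq_le _ _ _ _ _ Hcv (is_lim_seq_const (INR m * d))).
    intro t. specialize (Hslope t). lra. }
  simpl in Hlo, Hhi. lra.
Qed.

(* Where the limit excess is almost affine at scale d around c, the agent i
   eventually stops crossing c upwards: it stays at distance > d/2 from c
   (by excess_second_diff_ge), so a crossing would lower the excess by more
   than d/2, which cannot happen once the excess at c has nearly converged. *)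
Lemma eventually_no_upcrossing i c d :
  (i < m)%nat -> 0 < d -> second_diff limit_excess c d < d / 2 ->
  exists T, forall t, (T <= t)%nat -> ~ (x t i <= c <= x (Datatypes.S t) i).
Proof.
  intros Hi Hd Hflat.
  assert (Hfar : exists T, forall t, (T <= t)%nat -> d / 2 < Rabs (x t i - c)).
  { assert (Hcv : Un_cv (fun t => second_diff (excess m (x t)) c d)
                        (second_diff limit_excess c d))
      by (unfold second_diff; repeat apply CV_minus; apply excess_cv).
    destruct (Hcv (d / 2 - second_diff limit_excess c d)) as [T HT]; [lra|].
    exists T. intros t Ht. apply Rnot_le_lt. intro Hclose.
    pose proof (excess_second_diff_ge m (x t) c d i Hd Hi Hclose).
    specialize (HT t Ht). unfold R_dist in HT. apply Rabs_def2 in HT. lra. }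
  destruct Hfar as [T1 HT1].
  destruct (excess_cv c (d / 4)) as [T2 HT2]; [lra|].
  exists (T1 + T2)%nat. intros t Ht [Hbelow Habove].
  destruct (step_excess_drop m _ _ c (steps t)) as [dr [_ [Hdrop Hcross]]].
  specialize (Hcross i Hi (conj Hbelow Habove)).
  pose proof (HT1 t ltac:(lia)) as Hgap. rewrite Rabs_left1 in Hgap by lra.
  pose proof (HT2 t ltac:(lia)) as Hnow. pose proof (HT2 (Datatypes.S t) ltac:(lia)) as Hnext.
  unfold R_dist in Hnow, Hnext. apply Rabs_def2 in Hnow. apply Rabs_def2 in Hnext. lra.
Qed.

(* Each agent's opinion converges: otherwise it oscillates between two levels
   a < b, and hence crosses upwards, infinitely often, a level c in (a, b)
   where the limit excess is almost affine. *)
Lemma coordinate_converges i : (i < m)%nat -> exists l, Un_cv (fun t => x t i) l.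
Proof.
  intros Hi. apply NNPP. intro Hdiverge.
  destruct (oscillation _ _ (fun t => process_bounded t i Hi) Hdiverge)
    as [a [b [Hab [Hlow Hhigh]]]].
  destruct (small_second_difference limit_excess m a b limit_excess_slope Hab)
    as [c [d [Hc [Hd Hflat]]]].
  destruct (eventually_no_upcrossing i c d Hi Hd Hflat) as [T HT].
  destruct (Hlow T) as [t1 [Ht1 Hbelow]].
  destruct (Hhigh t1) as [t2 [Ht2 Habove]].
  destruct (upward_crossing (fun t => x t i) c t1 (t2 - t1)) as [s [Hs Hcross]].
  - simpl. lra.
  - replace (t1 + (t2 - t1))%nat with t2 by lia. simpl. lra.
  - exact (HT s ltac:(lia) Hcross).
Qed.

End AveragingProcess.

(* For a fixed candidate j the column (X(t)_{kj})_k
   evolves by averaging steps: the pair {i1(t), i2(t)} averages when j is in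
   S(t), and nothing moves otherwise. *)
Theorem theorem1 (m n : nat) (Omega : Type)
    (X : Omega -> nat -> nat -> nat -> R)
    (i1 i2 : Omega -> nat -> nat) (S : Omega -> nat -> nat -> bool) :
  (forall w, voting_diffusion m n (X w) (i1 w) (i2 w) (S w)) ->
  forall w, forall i j, (i < m)%nat -> (j < n)%nat ->
    exists l : R, Un_cv (fun t => X w t i j) l.
Proof.
  intros Hmodel w i j Hi Hj.
  destruct (Hmodel w) as [Hpair Hupdate].
  apply (coordinate_converges m (fun t k => X w t k j)); auto.
  intro t. destruct (Hpair t) as [Hp [Hq Hpq]].
  destruct (S w t j) eqn:Hsubject.
  - right. exists (i1 w t), (i2 w t). repeat split; auto.
    + rewrite Hupdate, Hsubject, Nat.eqb_refl by auto. reflexivity.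
    + rewrite Hupdate, Hsubject, Nat.eqb_refl, orb_true_r by auto. reflexivity.
    + intros k Hk Hkp Hkq. rewrite Hupdate by auto.
      apply Nat.eqb_neq in Hkp, Hkq. rewrite Hkp, Hkq. reflexivity.
  - left. intros k Hk. rewrite Hupdate, Hsubject, andb_false_r by auto. reflexivity.
Qed.
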